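(* Let $G$ be a graph that has exactly two odd cycles, and suppose these two cycles share no edge. Then the two cycles intersect either in a single vertex or not at all.
   Context: All graphs are finite and simple. An odd cycle is a cycle (subgraph) of odd length. *)

From mathcomp Require Import all_boot.
Set Implicit Arguments. Unset Strict Implicit. Unset Printing Implicit Defensive.

(* A finite simple graph: vertex type T : finType, adjacency e : rel T
   assumed symmetric and irreflexive (hypotheses of the theorem).
   A cycle (as a subgraph) is identified with its edge set; an edge is
   the 2-element vertex set {x, y}. *)

Definition cycle_edge_set (T : finType) (s : seq T) : {set {set T}} :=
  [set [set x; next s x] | x in s].

Definition odd_cycle (T : finType) (e : rel T) (C : {set {set T}}) : Prop :=
  exists s : seq T,
    [/\ ucycle e s, 3 <= size s, odd (size s) & C = cycle_edge_set s].

Definition sub_verts (T : finType) (C : {set {set T}}) : {set T} :=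
  \bigcup_(E in C) E.

From mathcomp Require Import all_boot.
Set Implicit Arguments. Unset Strict Implicit. Unset Printing Implicit Defensive.

(* Suppose the odd cycles C1, C2 share two vertices.  Walking along C2 from
   a common vertex u to the next vertex w of C1 gives a path P internally
   disjoint from C1, and w cuts C1 into two u-w arcs.  The two arc lengths
   add up to the odd length of C1, so P closes one of the arcs into an odd
   cycle.  That cycle contains an edge of C1 and an edge of C2, so it is
   neither C1 nor C2 when these are edge-disjoint. *)

Lemma oddD_either m n k : odd (m + n) -> odd (m + k) || odd (n + k).
Proof. by rewrite !oddD; case: (odd m); case: (odd n); case: (odd k). Qed.

Lemma last_rev (T : Type) (x : T) s : last x (rev s) = head x s.
Proof. by case: s => //= y s; rewrite rev_cons last_rcons. Qed.

Section CycleEdgeSet.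
Variable T : finType.
Implicit Types (x : T) (s l : seq T).

Lemma cycle_edge_set_rot n s : uniq s -> cycle_edge_set (rot n s) = cycle_edge_set s.
Proof.
move=> Us; apply/setP => E; apply/imsetP/imsetP => -[x xs ->];
  by exists x; rewrite ?mem_rot // in xs *; rewrite next_rot.
Qed.

Lemma cycle_edge_set_head x l : [set x; head x l] \in cycle_edge_set (x :: l).
Proof.
have -> : head x l = next (x :: l) x by case: l => [|y l] /=; rewrite eqxx.
exact/imset_f/mem_head.
Qed.

Lemma cycle_edge_set_last x l :
  uniq (x :: l) -> [set last x l; x] \in cycle_edge_set (x :: l).
Proof.
case/lastP: l => [|l y] U; first exact: cycle_edge_set_head x [::].
rewrite last_rcons -(cycle_edge_set_rot (size (x :: l)) U) -cats1 -cat_cons.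
by rewrite rot_size_cat; apply: cycle_edge_set_head.
Qed.

Lemma mem_sub_verts_cycle s x : x \in sub_verts (cycle_edge_set s) -> x \in s.
Proof.
case/bigcupP => _ /imsetP[y ys ->]; rewrite !inE => /orP[] /eqP->//.
by rewrite mem_next.
Qed.

End CycleEdgeSet.

Section OddCycles.
Variables (T : finType) (e : rel T).
Implicit Types (x y : T) (a b c s : seq T).

Lemma ucycle_glue x y a b c :
  ucycle e (x :: a ++ y :: b) -> path e y (rcons c x) -> uniq c ->
  ~~ has (mem (x :: a ++ y :: b)) c -> ucycle e (x :: a ++ y :: c).
Proof.
have cycle_arcs d :
    cycle e (x :: a ++ y :: d) = path e x (rcons a y) && path e y (rcons d x).
  by rewrite /= rcons_cat cat_path /= [path e x (rcons _ _)]rcons_path andbA.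
have uniq_arcs d : uniq (x :: a ++ y :: d) = uniq (rcons (x :: a) y ++ d).
  by rewrite cat_rcons.
rewrite /ucycle !cycle_arcs !uniq_arcs !cat_uniq.
move=> /andP[/andP[-> _] /and3P[-> _ _]] -> -> c_out; rewrite !andTb andbT.
apply: contra c_out => /hasP[z zc z_arc]; apply/hasP; exists z => //.
suff : z \in x :: a ++ y :: b by [].
by rewrite -cat_cons -cat_rcons mem_cat z_arc.
Qed.

Lemma glued_odd_cycle x y a b c (s := x :: a ++ y :: c) :
  ucycle e (x :: a ++ y :: b) -> path e y (rcons c x) -> uniq c ->
  ~~ has (mem (x :: a ++ y :: b)) c -> odd (size s) ->
  [/\ ucycle e s, 3 <= size s, odd (size s)
    & cycle_edge_set s :&: cycle_edge_set (x :: a ++ y :: b) != set0].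
Proof.
move=> ucb yc Uc c_out odd_s; split => //; first exact: ucycle_glue ucb yc Uc c_out.
  by move: odd_s; rewrite /s /= size_cat /= addnS; case: (size a + size c).
apply/set0Pn; exists [set x; head y a]; rewrite inE.
have head_arc d : head x (a ++ y :: d) = head y a by case: (a).
by rewrite -{1}(head_arc c) cycle_edge_set_head -(head_arc b) cycle_edge_set_head.
Qed.

Hypothesis e_sym : symmetric e.

Lemma odd_cycle_across_path u w p1 p2 q (s1 := u :: p1 ++ w :: p2) :
  ucycle e s1 -> odd (size s1) ->
  path e u (rcons q w) -> uniq q -> ~~ has (mem s1) q ->
  exists s, [/\ ucycle e s, 3 <= size s, odd (size s),
    cycle_edge_set s :&: cycle_edge_set s1 != set0
    & [set u; head w q] \in cycle_edge_set s].
Proof.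
move=> uc1 odd1 uqw Uq q_out.
have := odd1; rewrite /s1 -cat_cons size_cat => /(oddD_either (size (u :: q))).
case/orP => [oddA|oddB].
- have wqu : path e w (rcons (rev q) u).
    rewrite -rev_cons -(last_rcons u q w) -(belast_rcons u q w) rev_path.
    by rewrite (eq_path (e' := e)) // => ? ?; rewrite e_sym.
  have UqA : uniq (rev q) by rewrite rev_uniq.
  have q_outA : ~~ has (mem s1) (rev q) by rewrite has_rev.
  have size_wq : size (w :: rev q) = size (u :: q) by rewrite /= size_rev.
  have oddA' : odd (size (u :: p1 ++ w :: rev q)) by rewrite -cat_cons size_cat size_wq.
  have [ucA sA oA meet1] := glued_odd_cycle uc1 wqu UqA q_outA oddA'.
  exists (u :: p1 ++ w :: rev q); split => //.
  have -> : [set u; head w q] = [set last u (p1 ++ w :: rev q); u].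
    by rewrite setUC last_cat /= last_rev.
  by case/andP: ucA => _; apply: cycle_edge_set_last.
- have Erot : rot (size (u :: p1)) s1 = w :: p2 ++ u :: p1 by rewrite rot_size_cat.
  have U1 : uniq s1 by case/andP: uc1.
  have ucB : ucycle e (w :: p2 ++ u :: p1) by rewrite -Erot rot_ucycle.
  have q_outB : ~~ has (mem (w :: p2 ++ u :: p1)) q.
    by rewrite -Erot (eq_has (mem_rot _ _)).
  have oddB' : odd (size (w :: p2 ++ u :: q)) by rewrite -cat_cons size_cat.
  have [ucB' sB oB meet1] := glued_odd_cycle ucB uqw Uq q_outB oddB'.
  exists (w :: p2 ++ u :: q); split => //.
    by rewrite -(cycle_edge_set_rot (size (u :: p1)) U1) Erot.
  case/andP: ucB' => _ UB.
  rewrite -(cycle_edge_set_rot (size (w :: p2)) UB) -cat_cons rot_size_cat.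
  by have := cycle_edge_set_head u (q ++ w :: p2); case: (q).
Qed.

Lemma odd_cycle_of_two_shared_vertices s1 s2 u v :
  ucycle e s1 -> odd (size s1) -> ucycle e s2 ->
  u \in s1 -> u \in s2 -> v \in s1 -> v \in s2 -> u != v ->
  exists s, [/\ ucycle e s, 3 <= size s, odd (size s),
    cycle_edge_set s :&: cycle_edge_set s1 != set0
    & cycle_edge_set s :&: cycle_edge_set s2 != set0].
Proof.
move=> uc1 odd1 uc2 u1 u2 v1 v2 uv.
have U1 : uniq s1 by case/andP: uc1.
have U2 : uniq s2 by case/andP: uc2.
case: (rot_to u2) => i t Et.
have t_s1 : has (mem s1) t.
  apply/hasP; exists v => //.
  by move: v2; rewrite -(mem_rot i) Et inE eq_sym (negbTE uv).
case: (split_find t_s1) Et => w q r w1 q_out Et.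
have /andP[c2 U2'] : ucycle e (u :: rcons q w ++ r) by rewrite -Et rot_ucycle.
have uqw : path e u (rcons q w).
  by move: c2; rewrite /= rcons_cat cat_path => /andP[].
have Uq : uniq q.
  by move: U2' => /= /andP[_]; rewrite cat_uniq rcons_uniq => /andP[/andP[]].
have uw : u != w.
  by apply: contraNneq (proj1 (andP U2')) => ->; rewrite mem_cat mem_rcons mem_head.
case: (rot_to_arc U1 u1 w1 uw) => j p1 p2 _ _ Ej.
have uc1' : ucycle e (u :: p1 ++ w :: p2) by rewrite -Ej rot_ucycle.
have odd1' : odd (size (u :: p1 ++ w :: p2)) by rewrite -Ej size_rot.
have q_out' : ~~ has (mem (u :: p1 ++ w :: p2)) q.
  by rewrite -Ej (eq_has (mem_rot _ _)).
have [s [ucs ss odds meet1 edge2]] := odd_cycle_across_path uc1' odd1' uqw Uq q_out'.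
exists s; split => //; first by rewrite -Ej (cycle_edge_set_rot _ U1) in meet1.
apply/set0Pn; exists [set u; head w q].
rewrite inE edge2 -(cycle_edge_set_rot i U2) Et.
by have := cycle_edge_set_head u (rcons q w ++ r); case: (q).
Qed.

End OddCycles.

Theorem lemma2p1 (T : finType) (e : rel T)
  (e_sym : symmetric e) (e_irr : irreflexive e)
  (C1 C2 : {set {set T}}) :
  odd_cycle e C1 -> odd_cycle e C2 -> C1 != C2 ->
  (forall C, odd_cycle e C -> C = C1 \/ C = C2) ->
  C1 :&: C2 = set0 ->
  #|sub_verts C1 :&: sub_verts C2| <= 1.
Proof.
move=> [s1 [uc1 _ odd1 ->]] [s2 [uc2 _ _ ->]] _ only2 disjoint12.
rewrite leqNgt; apply/negP => /card_gt1P[u [v [/setIP[u1 u2] /setIP[v1 v2] uv]]].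
have [s [ucs ss odds meet1 meet2]] := odd_cycle_of_two_shared_vertices e_sym uc1 odd1 uc2
  (mem_sub_verts_cycle u1) (mem_sub_verts_cycle u2)
  (mem_sub_verts_cycle v1) (mem_sub_verts_cycle v2) uv.
have [Es|Es] := only2 _ (ex_intro _ s (And4 ucs ss odds erefl)).
- by move: meet2; rewrite Es disjoint12 eqxx.
- by move: meet1; rewrite Es setIC disjoint12 eqxx.
Qed.
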